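(* For integers $n,m\ge 0$, the number of lattice paths from $(0,0)$ to $(2n+m,m)$ with steps $(1,1),(1,-1),(2,0)$ that never go below the $x$-axis equals $$\sum_{p=0}^{n}\left(\binom{2n-2p+m}{n-p}-\binom{2n-2p+m}{n-p-1}\right)\binom{2n+m-p}{p}.$$
   Context: Binomial coefficients $\binom{a}{b}$ with $b<0$ are $0$. *)

From HB Require Import structures.
From mathcomp Require Import all_boot all_order all_algebra.
Set Implicit Arguments. Unset Strict Implicit. Unset Printing Implicit Defensive.
Import Order.TTheory GRing.Theory Num.Theory.
Local Open Scope ring_scope.

Inductive step := U | D | H.
Definition step_eqb (a b : step) : bool :=
  match a, b with U, U | D, D | H, H => true | _, _ => false end.
Lemma step_eqP : Equality.axiom step_eqb.
Proof. by case; case; constructor. Qed.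
HB.instance Definition _ := hasDecEq.Build step step_eqP.

Definition xstep (s : step) : nat := match s with U => 1 | D => 1 | H => 2 end.
Definition ystep (s : step) : int := match s with U => 1 | D => -1 | H => 0 end.

(* A lattice path starting at (0,0) is a finite sequence of steps. *)
Definition xend (w : seq step) : nat := (\sum_(s <- w) xstep s)%N.
Definition height (w : seq step) (k : nat) : int := \sum_(s <- take k w) ystep s.

Definition good_path (x : nat) (y : int) (w : seq step) : Prop :=
  xend w = x /\ height w (size w) = y /\ (forall k, (k <= size w)%N -> 0 <= height w k).

Definition binZ (a : nat) (b : int) : int :=
  if b < 0 then 0 else ('C(a, `|b|%N))%:Z.

From mathcomp Require Import all_boot all_order all_algebra.
From mathcomp Require Import zify ring.
Import Order.TTheory GRing.Theory Num.Theory.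
Local Open Scope ring_scope.

(* Sort the paths by their number p of flat steps H.  Deleting the flat steps
   of such a path leaves a path of 2d+m up/down steps, d = n-p, from height 0
   to m that stays nonnegative, and the p flat steps can be put back in
   C(2n+m-p, p) positions.  By the reflection principle there are
   C(2d+m, d) - C(2d+m, d-1) such up/down paths; below, the reflection formula
   is checked against the recurrence that both sides satisfy. *)

Fixpoint all_words (k : nat) : seq (seq step) :=
  if k is k'.+1 then [seq s :: w | s <- [:: U; D; H], w <- all_words k']
  else [:: [::]].

Lemma all_wordsS k :
  all_words k.+1 = [seq s :: w | s <- [:: U; D; H], w <- all_words k].
Proof. by []. Qed.

Lemma mem_all_words k w : (w \in all_words k) = (size w == k).
Proof.
elim: k w => [|k IH] w; first by case: w.
rewrite all_wordsS; apply/allpairsP/idP => [[[s w'] /= [_ + ->]]|].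
  by rewrite IH.
case: w => // s w; rewrite eqSS -IH => w_k.
by exists (s, w); case: s.
Qed.

Lemma all_words_uniq k : uniq (all_words k).
Proof.
elim: k => // k IH; rewrite all_wordsS.
by apply: allpairs_uniq => // -[? ?] [? ?] _ _ [-> ->].
Qed.

Lemma count_all_words k (P : pred (seq step)) :
  count P (all_words k.+1) = (count (fun w => P (U :: w)) (all_words k)
    + count (fun w => P (D :: w)) (all_words k)
    + count (fun w => P (H :: w)) (all_words k))%N.
Proof. by rewrite /= !count_cat !count_map addn0 addnA. Qed.

Fixpoint nonneg_walk (y h : int) (w : seq step) : bool :=
  (0 <= h) && (if w is s :: w' then nonneg_walk y (h + ystep s) w' else h == y).

Lemma nonneg_walk_neg y h w : h < 0 -> nonneg_walk y h w = false.
Proof. by case: w => [|s w] h_lt0 /=; rewrite lt_geF. Qed.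

Lemma height_nil k : height [::] k = 0.
Proof. by rewrite /height big_nil. Qed.

Lemma height_cons0 s w : height (s :: w) 0 = 0.
Proof. by rewrite /height big_nil. Qed.

Lemma height_consS s w k : height (s :: w) k.+1 = ystep s + height w k.
Proof. by rewrite /height /= big_cons. Qed.

Lemma nonneg_walkP y h w : nonneg_walk y h w <->
  h + height w (size w) = y /\ forall k, (k <= size w)%N -> 0 <= h + height w k.
Proof.
elim: w h => [|s w IH] h /=.
  rewrite height_nil addr0; split=> [/andP[h0 /eqP <-]|[<- /(_ 0%N isT)]].
    by split=> // k _; rewrite height_nil addr0.
  by rewrite height_nil addr0 => ->; rewrite eqxx.
rewrite height_consS addrA; split => [/andP[h0 /IH[end_y above]]|[end_y above]].
  by split=> // -[|k] k_le; rewrite ?height_cons0 ?addr0 ?height_consS ?addrA ?above.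
apply/andP; split; first by have := above 0%N isT; rewrite height_cons0 addr0.
by apply/IH; split=> // k k_le; have := above k.+1 k_le; rewrite height_consS addrA.
Qed.

Fixpoint ballot (y : int) (k : nat) (h : int) : nat :=
  if 0 <= h then
    if k is k'.+1 then (ballot y k' (h + 1) + ballot y k' (h - 1))%N
    else (h == y : nat)
  else 0.

Lemma ballot_neg y k h : h < 0 -> ballot y k h = 0%N.
Proof. by case: k => [|k] h_lt0 /=; rewrite lt_geF. Qed.

Lemma count_nonneg_walks y h L q :
  count (fun w => nonneg_walk y h w && (count_mem H w == q)) (all_words L)
  = (ballot y (L - q) h * 'C(L, q))%N.
Proof.
elim: L h q => [|L IH] h q.
  case: q => [|q] /=; last by rewrite andbF muln0.
  by rewrite eqxx andbT addn0 muln1; case: ifP.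
have [h_ge0|h_lt0] := boolP (0 <= h); last first.
  rewrite ballot_neg ?mul0n; last by lia.
  by rewrite (@eq_count _ _ pred0) ?count_pred0 // => w; rewrite nonneg_walk_neg //; lia.
rewrite count_all_words /= h_ge0 /= addr0 (IH (h + 1) q) (IH (h - 1) q).
case: q => [|q].
  rewrite (@eq_count _ _ pred0) => [|w]; last by rewrite andbF.
  by rewrite count_pred0 !subn0 !bin0 !muln1 addn0 /= h_ge0.
rewrite (IH h q) subSS.
case: (ltngtP q L) => [q_lt|q_gt|<-].
- by rewrite -(subnSK q_lt) /= h_ge0 binS; ring.
- by rewrite !bin_small ?muln0 // ltnS ltnW.
- by rewrite subnn !binn bin_small // !muln0.
Qed.

Fixpoint free_walks (k : nat) (t : int) : nat :=
  if k is k'.+1 then (free_walks k' (t - 1) + free_walks k' (t + 1))%N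
  else (t == 0 : nat).

Lemma free_walks_gt k t : k%:Z < t -> free_walks k t = 0%N.
Proof.
elim: k t => [|k IH] t t_gt /=; first by have /negPf-> : t != 0 by lia.
by rewrite !IH //; lia.
Qed.

Lemma free_walks_bin k j : free_walks k (k%:Z - 2 * j%:Z) = 'C(k, j).
Proof.
elim: k j => [|k IH] [|j] //=.
  rewrite [free_walks _ (_ + 1)]free_walks_gt; last by lia.
  by rewrite addn0 bin0 -(bin0 k) -IH; congr free_walks; lia.
rewrite binS -!IH.
by congr (free_walks _ _ + free_walks _ _)%N; lia.
Qed.

Lemma free_walksE k (j : int) :
  (free_walks k (k%:Z - 2 * j))%:Z = binZ k j.
Proof.
case: j => j; rewrite /binZ /=; first by rewrite free_walks_bin.
by rewrite free_walks_gt //; lia.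
Qed.

Lemma ballot_reflection (y h : int) k : 0 <= y -> -1 <= h ->
  (ballot y k h)%:Z = (free_walks k (y - h))%:Z - (free_walks k (y + 2 + h))%:Z.
Proof.
move=> y_ge0; elim: k h => [|k IH] h h_ge /=; case: ifP => h0.
(* At h = -1 both sides vanish; this is what lets the induction step go
   down from h = 0. *)
2,4: by have -> : y + 2 + h = y - h by [lia]; rewrite subrr.
- have /negPf-> : y + 2 + h != 0 by lia.
  by rewrite subr0 subr_eq0 eq_sym.
- rewrite !PoszD !IH; try lia.
  by rewrite !opprD opprK !addrA; ring.
Qed.

Lemma ballot_binZ (m d : nat) :
  (ballot m (2 * d + m) 0)%:Z = binZ (2 * d + m) d - binZ (2 * d + m) (d%:Z - 1).
Proof.
rewrite ballot_reflection // -!free_walksE.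
by congr ((free_walks _ _)%:Z - (free_walks _ _)%:Z); lia.
Qed.

Lemma xendE w : xend w = (size w + count_mem H w)%N.
Proof.
rewrite /xend; elim: w => [|s w IH]; first by rewrite big_nil.
by rewrite big_cons IH /=; case: s => /=; lia.
Qed.

Lemma height_add_count_H_le w :
  height w (size w) + (count_mem H w)%:Z <= (size w)%:Z.
Proof.
rewrite /height take_size; elim: w => [|s w IH]; first by rewrite big_nil.
by rewrite big_cons /= PoszD; case: s IH => /=; lia.
Qed.

Lemma good_pathE x y w : good_path x y w <-> xend w = x /\ nonneg_walk y 0 w.
Proof.
rewrite /good_path.
split=> [[-> [end_y above]] | [-> /nonneg_walkP[end_y above]]]; split=> //.
  by apply/nonneg_walkP; split=> [|k /above]; rewrite add0r.
by rewrite add0r in end_y; split=> // k /above; rewrite add0r.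
Qed.

Definition walks_with (x : nat) (y : int) (p : nat) : seq (seq step) :=
  [seq w <- all_words (x - p) | nonneg_walk y 0 w && (count_mem H w == p)].

Lemma mem_walks_with x y p w : (w \in walks_with x y p) =
  [&& nonneg_walk y 0 w, count_mem H w == p & size w == x - p]%N.
Proof. by rewrite mem_filter mem_all_words andbA. Qed.

Lemma uniq_walks_with x y s :
  uniq s -> uniq (flatten [seq walks_with x y p | p <- s]).
Proof.
elim: s => //= p s IH /andP[p_notin s_uniq].
rewrite cat_uniq IH // filter_uniq ?all_words_uniq //= andbT.
apply/hasPn => w /flatten_mapP[q q_in].
rewrite !mem_walks_with => /and3P[_ /eqP w_q _]; apply/negP => /and3P[_ /eqP w_p _].
by move: p_notin; rewrite -w_p w_q q_in.
Qed.

Lemma good_path_walks_with n m w : good_path (2 * n + m) m%:Z w <->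
  (count_mem H w <= n)%N /\ w \in walks_with (2 * n + m) m (count_mem H w).
Proof.
rewrite good_pathE mem_walks_with eqxx xendE /=.
split=> [[x_w walk] | [c_le /andP[walk /eqP size_w]]]; last by split=> //; lia.
have /nonneg_walkP[end_m _] := walk; have bound := height_add_count_H_le w.
(* The occurrences of [count_mem H w] differ in their elaborated eqType sort,
   which [lia] does not see through. *)
set c := count_mem H w in x_w bound *.
by rewrite walk; split; [lia | apply/eqP; lia].
Qed.

Lemma size_walks_with n m p : (p <= n)%N ->
  (size (walks_with (2 * n + m) m p))%:Z =
    (binZ (2 * n - 2 * p + m) (n - p)%N%:Z
       - binZ (2 * n - 2 * p + m) ((n - p)%N%:Z - 1)) * ('C(2 * n + m - p, p))%:Z.
Proof.
move=> p_le; rewrite size_filter count_nonneg_walks PoszM.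
have -> : (2 * n + m - p - p = 2 * (n - p) + m)%N by lia.
have -> : (2 * n - 2 * p + m = 2 * (n - p) + m)%N by lia.
by rewrite ballot_binZ.
Qed.

Theorem lemma3p8 (n m : nat) :
  exists L : seq (seq step),
    uniq L /\
    (forall w, w \in L <-> good_path (2 * n + m)%N (m%:Z) w) /\
    (size L)%:Z =
      \sum_(0 <= p < n.+1)
        ((binZ (2 * n - 2 * p + m)%N ((n - p)%N%:Z)
          - binZ (2 * n - 2 * p + m)%N ((n - p)%N%:Z - 1))
         * ('C(2 * n + m - p, p))%:Z).
Proof.
exists (flatten [seq walks_with (2 * n + m) m p | p <- iota 0 n.+1]).
split; first exact/uniq_walks_with/iota_uniq.
split=> [w|].
  rewrite good_path_walks_with; split=> [/flatten_mapP[p + w_p]|[c_le w_c]].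
    rewrite mem_iota => /andP[_ p_lt]; move: (w_p).
    by rewrite mem_walks_with => /and3P[_ /eqP-> _].
  by apply/flatten_mapP; exists (count_mem H w); rewrite ?mem_iota.
rewrite size_flatten sumnE !big_map -natz natr_sum /index_iota subn0.
by apply: eq_big_seq => p; rewrite mem_iota add0n ltnS natz; exact: size_walks_with.
Qed.
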